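(* Let $\mathbb{R}^n$ be endowed with the $\ell_1$ norm and $\mathbb{R}^m$ with the Euclidean norm $\|\cdot\|_2$. Let $A\in\mathbb{R}^{m\times n}$, $b\in\mathbb{R}^m$ and $Q\in\mathbb{R}^{m\times m}$ symmetric positive semidefinite be such that $\begin{bmatrix}Q^{1/2}A\\ b^{\mathsf T}A\end{bmatrix}$ has at least two different columns. Let $f(u)=\frac12\langle Qu,u\rangle+\langle b,u\rangle$. Then $v=2Q^{1/2}u^\star$ is the same for all $u^\star\in\operatorname{Argmin}_{u\in\mathrm{conv}(A)}f(u)$, and \[ \mu^\star_{f,A}\ge\frac{\Phi_v(\bar A)^2}{4}>0,\qquad \bar A:=\begin{bmatrix}Q^{1/2}A\\ 2b^{\mathsf T}A\end{bmatrix}\in\mathbb{R}^{(m+1)\times n}. \]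
   Context: $\Delta_{n-1}=\{x\in\mathbb{R}^n_+:\sum_ix_i=1\}$; a matrix is identified with the set of its columns; $\mathrm{conv}(A)=\{Ax:x\in\Delta_{n-1}\}$. With $f^\star=\min_{x\in\Delta_{n-1}}f(Ax)$ and $Z^\star=\{z\in\Delta_{n-1}:f(Az)=f^\star\}$, $\mu^\star_{f,A}=\inf_{x\in\Delta_{n-1}\setminus Z^\star}\frac{2(f(Ax)-f^\star)}{\mathrm{dist}(x,Z^\star)^2}$, where $\mathrm{dist}(x,Z^\star)=\min_{z\in Z^\star}\|x-z\|_1$. For $v\in\mathbb{R}^m$ and $\bar w=(w,w_{m+1})\in\mathbb{R}^{m+1}$ put $\|\bar w\|_v=\sqrt{\|w\|_2^2+|\langle v,w\rangle+w_{m+1}|}$, and for nonempty $F,G$ put $\mathrm{dist}_v(F,G)=\min_{\bar w\in F,\bar w'\in G}\|\bar w-\bar w'\|_v$. For $\bar A\in\mathbb{R}^{(m+1)\times n}$ with at least two different columns let $F(v)=\operatorname{Argmin}_{\bar w\in\mathrm{conv}(\bar A)}\langle(v,1),\bar w\rangle$ and $\Phi_v(\bar A)=\min\{\mathrm{dist}_v(G,\mathrm{conv}(\bar A\setminus G)):G\text{ a face of }F(v),\ \emptyset\ne G\ne\mathrm{conv}(\bar A)\}$, where $\bar A\setminus G$ denotes the columns of $\bar A$ not in $G$. *)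

From mathcomp Require Import all_boot all_order all_algebra.
From mathcomp Require Import boolp classical_sets reals.
Set Implicit Arguments. Unset Strict Implicit. Unset Printing Implicit Defensive.
Import Order.TTheory GRing.Theory Num.Theory.
Local Open Scope ring_scope.
Local Open Scope classical_set_scope.

Section Defs.
Variable R : realType.

Definition simplex (n : nat) : set 'cV[R]_n :=
  [set x | (forall i, 0 <= x i 0) /\ \sum_i x i 0 = 1].

Arguments simplex : clear implicits.

Definition conv (k n : nat) (A : 'M[R]_(k, n)) : set 'cV[R]_k :=
  [set y | exists2 x, simplex n x & y = A *m x].

Definition dotv (k : nat) (u w : 'cV[R]_k) : R := \sum_i u i 0 * w i 0.
Definition norm1 (k : nat) (x : 'cV[R]_k) : R := \sum_i `|x i 0|.
Definition norm2 (k : nat) (x : 'cV[R]_k) : R := Num.sqrt (\sum_i x i 0 ^+ 2).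

Definition quadf (m : nat) (Q : 'M[R]_m) (b : 'cV[R]_m) (u : 'cV[R]_m) : R :=
  2^-1 * dotv (Q *m u) u + dotv b u.

Definition argmin (k : nat) (f : 'cV[R]_k -> R) (C : set 'cV[R]_k) : set 'cV[R]_k :=
  [set u | C u /\ forall u', C u' -> f u <= f u'].

Definition fstar (m n : nat) (f : 'cV[R]_m -> R) (A : 'M[R]_(m, n)) : R :=
  inf [set r | exists2 x, simplex n x & r = f (A *m x)].

Definition Zstar (m n : nat) (f : 'cV[R]_m -> R) (A : 'M[R]_(m, n)) : set 'cV[R]_n :=
  [set z | simplex n z /\ f (A *m z) = fstar f A].

Definition dist1 (n : nat) (x : 'cV[R]_n) (Z : set 'cV[R]_n) : R :=
  inf [set r | exists2 z, Z z & r = norm1 (x - z)].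

Definition mu_star (m n : nat) (f : 'cV[R]_m -> R) (A : 'M[R]_(m, n)) : R :=
  inf [set r | exists2 x, (simplex n `\` Zstar f A) x &
        r = 2 * (f (A *m x) - fstar f A) / (dist1 x (Zstar f A)) ^+ 2].

Definition normv (m : nat) (v : 'cV[R]_m) (w : 'cV[R]_(m + 1)) : R :=
  Num.sqrt (norm2 (usubmx w) ^+ 2 + `|dotv v (usubmx w) + dsubmx w 0 0|).

Definition distv (m : nat) (v : 'cV[R]_m) (F G : set 'cV[R]_(m + 1)) : R :=
  inf [set r | exists2 w, F w & exists2 w', G w' & r = normv v (w - w')].

Definition Fv (m n : nat) (v : 'cV[R]_m) (Ab : 'M[R]_(m + 1, n)) : set 'cV[R]_(m + 1) :=
  argmin (dotv (col_mx v (1 : 'cV[R]_1))) (conv Ab).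

Definition is_face (k : nat) (C G : set 'cV[R]_k) : Prop :=
  [/\ G `<=` C,
      (forall x y (t : R), G x -> G y -> 0 <= t -> t <= 1 -> G (t *: x + (1 - t) *: y)) &
      (forall x y (t : R), C x -> C y -> 0 < t -> t < 1 ->
          G (t *: x + (1 - t) *: y) -> G x /\ G y)].

(* conv(Abar \ G): convex hull of the columns of Abar not lying in G *)
Definition conv_compl (k n : nat) (Ab : 'M[R]_(k, n)) (G : set 'cV[R]_k) : set 'cV[R]_k :=
  [set y | exists2 x, simplex n x /\ (forall i, G (col i Ab) -> x i 0 = 0) & y = Ab *m x].

Definition Phi (m n : nat) (v : 'cV[R]_m) (Ab : 'M[R]_(m + 1, n)) : R :=
  inf [set r | exists2 G, [/\ is_face (Fv v Ab) G, G <> set0 & G <> conv Ab] &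
               r = distv v G (conv_compl Ab G)].

End Defs.
Arguments simplex {R} n.

(* Write f(A x) = |P x|^2 / 2 + B x with P = S A and B = b^T A, and let x0 minimize it on
   the simplex. The objective is strictly convex in P x, so v = 2 P x0 does not depend on the
   minimizer, and for z in the optimal set first-order optimality turns the [normv v]-distance
   into the optimality gap: ||Abar x - Abar z||_v^2 = 2 (f(A x) - f(A x0)).
   Given a non-optimal x, let z be an optimal point l1-closest to x and write
   x - z = theta (a - c) with a, c in the simplex and theta = ||x - z||_1 / 2. The point
   q = Abar c lies in F(v), and no column in the support of a lies in the minimal face G of
   q, since otherwise z could move towards x inside the optimal set. Hence Abar a lies in
   conv(Abar \ G), and as t ||w||_v <= ||t w||_v for t in [0, 1],
   theta Phi_v <= theta ||q - Abar a||_v <= ||Abar x - Abar z||_v, i.e. the bound on mu.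
   Finally a face of F(v) is the hull of the columns it contains, so Phi_v is at least the
   least distance between conv(Abar_S) and conv(Abar_(not S)) over the finitely many column
   sets S for which these hulls are disjoint, which is positive by compactness. *)

From mathcomp Require Import all_boot all_order all_algebra.
From mathcomp Require Import boolp classical_sets reals.
From mathcomp Require Import topology normedtype derive.
From mathcomp Require Import ring lra.
Import Order.TTheory GRing.Theory Num.Theory.
Import numFieldNormedType.Exports.
Local Open Scope ring_scope.
Local Open Scope classical_set_scope.
Set Implicit Arguments. Unset Strict Implicit. Unset Printing Implicit Defensive.

Section DotNorm.
Variable R : realType.
Implicit Types k : nat.

Lemma mxDE k l (M N : 'M[R]_(k, l)) i j : (M + N) i j = M i j + N i j.
Proof. by rewrite !mxE. Qed.

Lemma mxBE k l (M N : 'M[R]_(k, l)) i j : (M - N) i j = M i j - N i j.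
Proof. by rewrite !mxE. Qed.

Lemma mxZE k l a (M : 'M[R]_(k, l)) i j : (a *: M) i j = a * M i j.
Proof. by rewrite !mxE. Qed.

Lemma dotvE k (u w : 'cV[R]_k) : dotv u w = (u^T *m w) 0 0.
Proof. by rewrite /dotv mxE; apply: eq_bigr => i _; rewrite mxE. Qed.

Lemma dotvC k (u w : 'cV[R]_k) : dotv u w = dotv w u.
Proof. by apply: eq_bigr => i _; rewrite mulrC. Qed.

Lemma dotvDr k (u w w' : 'cV[R]_k) : dotv u (w + w') = dotv u w + dotv u w'.
Proof. by rewrite /dotv -big_split; apply: eq_bigr => i _; rewrite mxE mulrDr. Qed.

Lemma dotvZr k (u w : 'cV[R]_k) a : dotv u (a *: w) = a * dotv u w.
Proof. by rewrite /dotv mulr_sumr; apply: eq_bigr => i _; rewrite mxE mulrCA. Qed.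

Lemma dotvNr k (u w : 'cV[R]_k) : dotv u (- w) = - dotv u w.
Proof. by rewrite -scaleN1r dotvZr mulN1r. Qed.

Lemma dotvBr k (u w w' : 'cV[R]_k) : dotv u (w - w') = dotv u w - dotv u w'.
Proof. by rewrite dotvDr dotvNr. Qed.

Lemma dotvDl k (u u' w : 'cV[R]_k) : dotv (u + u') w = dotv u w + dotv u' w.
Proof. by rewrite dotvC dotvDr !(dotvC w). Qed.

Lemma dotvZl k (u w : 'cV[R]_k) a : dotv (a *: u) w = a * dotv u w.
Proof. by rewrite dotvC dotvZr dotvC. Qed.

Lemma dotvNl k (u w : 'cV[R]_k) : dotv (- u) w = - dotv u w.
Proof. by rewrite dotvC dotvNr dotvC. Qed.

Lemma dotv0r k (u : 'cV[R]_k) : dotv u 0 = 0.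
Proof. by rewrite /dotv big1 // => i _; rewrite mxE mulr0. Qed.

Lemma dotvv_ge0 k (u : 'cV[R]_k) : 0 <= dotv u u.
Proof. by apply: sumr_ge0 => i _; rewrite -expr2 sqr_ge0. Qed.

Lemma dotvv_eq0 k (u : 'cV[R]_k) : dotv u u = 0 -> u = 0.
Proof.
move=> /eqP; rewrite psumr_eq0; last by move=> i _; rewrite -expr2 sqr_ge0.
move=> /allP u0; apply/matrixP => i j; rewrite ord1 mxE.
by have := u0 i (mem_index_enum _); rewrite -expr2 sqrf_eq0 => /eqP.
Qed.

Lemma dotv_col_mx k1 k2 (a p : 'cV[R]_k1) (c q : 'cV[R]_k2) :
  dotv (col_mx a c) (col_mx p q) = dotv a p + dotv c q.
Proof.
rewrite /dotv big_split_ord /=.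
by congr (_ + _); apply: eq_bigr => i _; rewrite ?col_mxEu ?col_mxEd.
Qed.

Lemma dot1v (u : 'cV[R]_1) : dotv 1 u = u 0 0.
Proof. by rewrite /dotv big_ord1 mxE mul1r. Qed.

Lemma norm2_sqr k (u : 'cV[R]_k) : norm2 u ^+ 2 = dotv u u.
Proof.
rewrite /norm2 sqr_sqrtr; last by apply: sumr_ge0 => i _; rewrite sqr_ge0.
by apply: eq_bigr => i _; rewrite expr2.
Qed.

Lemma norm1D k (x y : 'cV[R]_k) : norm1 (x + y) <= norm1 x + norm1 y.
Proof.
by rewrite /norm1 -big_split; apply: ler_sum => i _; rewrite mxE ler_normD.
Qed.

Lemma norm1Z k (x : 'cV[R]_k) a : norm1 (a *: x) = `|a| * norm1 x.
Proof. by rewrite /norm1 mulr_sumr; apply: eq_bigr => i _; rewrite mxE normrM. Qed.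

Lemma norm1N k (x : 'cV[R]_k) : norm1 (- x) = norm1 x.
Proof. by rewrite -scaleN1r norm1Z normrN normr1 mul1r. Qed.

Lemma norm1B k (x y : 'cV[R]_k) : norm1 (x - y) <= norm1 x + norm1 y.
Proof. by rewrite -(norm1N y); apply: norm1D. Qed.

Lemma norm1_nonneg k (x : 'cV[R]_k) : (forall i, 0 <= x i 0) -> norm1 x = \sum_i x i 0.
Proof. by move=> x0; apply: eq_bigr => i _; rewrite ger0_norm. Qed.

End DotNorm.

Section Simplex.
Variable R : realType.
Implicit Types (k n : nat).

Lemma divr_in01 (a b : R) : 0 <= a -> a <= b -> 0 < b -> 0 <= a / b <= 1.
Proof.
move=> a0 ab b0; apply/andP; split; first exact: divr_ge0 a0 (ltW b0).
by rewrite ler_pdivrMr // mul1r.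
Qed.

Lemma norm1_simplex n (x : 'cV[R]_n) : simplex n x -> norm1 x = 1.
Proof. by case=> x0 <-; apply: norm1_nonneg. Qed.

Lemma simplex_le1 n (x : 'cV[R]_n) i : simplex n x -> x i 0 <= 1.
Proof. by case=> x0 <-; rewrite (bigD1 i) //= lerDl sumr_ge0. Qed.

Lemma sum_indicator1 n (j : 'I_n) : \sum_i ((i == j)%:R : R) = 1.
Proof. by rewrite (bigD1 j) //= eqxx big1 ?addr0 // => i /negbTE ->. Qed.

Lemma simplex_delta n (i : 'I_n) : simplex n (delta_mx i 0 : 'cV[R]_n).
Proof.
split=> [j|]; first by rewrite mxE ler0n.
by under eq_bigr do rewrite mxE eqxx andbT; apply: sum_indicator1.
Qed.

Lemma simplex_convex n (x y : 'cV[R]_n) t : simplex n x -> simplex n y -> 0 <= t <= 1 ->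
  simplex n (t *: x + (1 - t) *: y).
Proof.
move=> [x0 x1] [y0 y1] /andP[t0 t1]; split=> [i|].
  by rewrite !mxE addr_ge0 // mulr_ge0 // subr_ge0.
under eq_bigr do rewrite !mxE.
by rewrite big_split /= -!mulr_sumr x1 y1 !mulr1 addrC subrK.
Qed.

Lemma simplex_has_pos n (x : 'cV[R]_n) : simplex n x -> exists i, 0 < x i 0.
Proof.
move=> [x0 x1]; apply/not_existsP => xn.
suff : \sum_i x i 0 = 0 by rewrite x1 => /eqP; rewrite oner_eq0.
apply: big1 => i _; apply/eqP; rewrite eq_le x0 andbT leNgt; exact/negP/xn.
Qed.

Lemma simplex_eq_delta n (x : 'cV[R]_n) i : simplex n x -> x i 0 = 1 -> x = delta_mx i 0.
Proof.
move=> [x0 x1] xi; apply/matrixP => j k; rewrite ord1 mxE eqxx andbT.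
case: eqP => [->//|/eqP ji].
have : \sum_(l | l != i) x l 0 = 0 by move: x1; rewrite (bigD1 i) //= xi; lra.
by move/psumr_eq0P; apply=> // l _; apply: x0.
Qed.

Lemma simplex_peel n (x : 'cV[R]_n) i : simplex n x -> 0 < x i 0 < 1 ->
  exists2 x', simplex n x' &
    [/\ x = x i 0 *: delta_mx i 0 + (1 - x i 0) *: x', x' i 0 = 0 &
        forall j, x' j 0 != 0 -> x j 0 != 0].
Proof.
move=> [x0 x1] /andP[xi0 xi1].
have d0 : 1 - x i 0 != 0 by rewrite subr_eq0 eq_sym lt_eqF.
set x' := (1 - x i 0)^-1 *: (x - x i 0 *: delta_mx i 0).
have x'E j : x' j 0 = (1 - x i 0)^-1 * (x j 0 - x i 0 * (j == i)%:R).
  by rewrite !mxE eqxx andbT.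
exists x'.
  split=> [j|].
    rewrite x'E; apply: mulr_ge0; first by rewrite invr_ge0 subr_ge0 ltW.
    by case: eqP => [->|_]; rewrite ?mulr1 ?subrr // mulr0 subr0.
  under eq_bigr do rewrite x'E.
  by rewrite -mulr_sumr sumrB -mulr_sumr x1 sum_indicator1 mulr1 mulVf.
split=> [|| j].
- by apply/matrixP => j k; rewrite ord1 !mxE eqxx andbT; field.
- by rewrite x'E eqxx mulr1 subrr mulr0.
- rewrite x'E; have [->|_] := eqVneq j i; first by rewrite mulr1 subrr mulr0 eqxx.
  by rewrite mulr0 subr0 mulf_eq0 negb_or => /andP[].
Qed.

Lemma simplex_normalize n (w : 'cV[R]_n) : (forall i, 0 <= w i 0) -> 0 < \sum_i w i 0 ->
  simplex n ((\sum_i w i 0)^-1 *: w).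
Proof.
move=> w0 s0; split=> [i|]; first by rewrite mxE; apply: mulr_ge0 => //; rewrite invr_ge0 ltW.
by under eq_bigr do rewrite mxE; rewrite -mulr_sumr mulVf ?gt_eqF.
Qed.

Lemma norm1_sub_delta n (w : 'cV[R]_n) j a : (forall i, 0 <= w i 0) -> 0 <= a <= w j 0 ->
  norm1 (w - a *: delta_mx j 0) = \sum_i w i 0 - a.
Proof.
move=> w0 /andP[a0 aw].
rewrite norm1_nonneg => [|i]; last first.
  by rewrite !mxE; case: eqP => [->|_]; rewrite ?mulr1 ?subr_ge0 ?mulr0 ?subr0.
under eq_bigr do rewrite !mxE eqxx andbT.
by rewrite sumrB -mulr_sumr sum_indicator1 mulr1.
Qed.

Lemma conv_convex k n (M : 'M[R]_(k, n)) y1 y2 t : conv M y1 -> conv M y2 -> 0 <= t <= 1 ->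
  conv M (t *: y1 + (1 - t) *: y2).
Proof.
move=> [x1 sx1 ->] [x2 sx2 ->] t01; exists (t *: x1 + (1 - t) *: x2).
  exact: simplex_convex.
by rewrite mulmxDr !scalemxAr.
Qed.

Lemma conv_convex3 k n (M : 'M[R]_(k, n)) y1 y2 y3 a b :
  conv M y1 -> conv M y2 -> conv M y3 -> 0 <= a -> 0 <= b -> a + b <= 1 ->
  conv M (a *: y1 + b *: y2 + (1 - a - b) *: y3).
Proof.
move=> c1 c2 c3 a0 b0 ab1.
have [ab0|abn0] := eqVneq (a + b) 0.
  have [-> ->] : a = 0 /\ b = 0 by split; lra.
  by rewrite !scale0r !add0r !subr0 scale1r.
have abp : 0 < a + b by rewrite lt_def abn0 addr_ge0.
have c12 : conv M ((a / (a + b)) *: y1 + (1 - a / (a + b)) *: y2).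
  by apply: conv_convex; rewrite ?divr_in01 ?lerDl.
have := conv_convex c12 c3 (t := a + b); rewrite ab1 ltW // => /(_ isT).
congr conv.
by apply/matrixP => i j; rewrite !mxE; field.
Qed.

Lemma conv_col k n (M : 'M[R]_(k, n)) i : conv M (col i M).
Proof. by exists (delta_mx i 0); rewrite ?colE //; apply: simplex_delta. Qed.

End Simplex.

Arguments simplex_delta {R n} i.

Section Inf.
Variable R : realType.
Implicit Types E : set R.

Lemma inf_ge0 E : (forall r, E r -> 0 <= r) -> 0 <= inf E.
Proof.
move=> E0; have [[r Er]|/set0P/negP] := pselect (E !=set0).
  by apply: lb_le_inf; [exists r | move=> y /E0].
by rewrite negbK => /eqP ->; rewrite inf0.
Qed.

Lemma inf_le_nonneg E r : (forall s, E s -> 0 <= s) -> E r -> inf E <= r.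
Proof. by move=> E0 Er; apply: ge_inf => //; exists 0 => y /E0. Qed.

Lemma inf_attained E r : E r -> (forall s, E s -> r <= s) -> inf E = r.
Proof.
move=> Er rE; apply/eqP; rewrite eq_le lb_le_inf ?andbT //; last by exists r.
by apply: ge_inf => //; exists r.
Qed.

End Inf.

Section NormV.
Variables (R : realType) (m : nat) (v : 'cV[R]_m).
Implicit Types w : 'cV[R]_(m + 1).

Definition ldot w : R := dotv (col_mx v 1) w.

Lemma ldotZ w a : ldot (a *: w) = a * ldot w.
Proof. exact: dotvZr. Qed.

Lemma ldot_col_mx (a : 'cV[R]_m) (c : 'cV[R]_1) : ldot (col_mx a c) = dotv v a + c 0 0.
Proof. by rewrite /ldot dotv_col_mx dot1v. Qed.

Lemma ldotE w : ldot w = dotv v (usubmx w) + dsubmx w 0 0.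
Proof. by rewrite -{1}(vsubmxK w) ldot_col_mx. Qed.

Lemma normv_sqr w : normv v w ^+ 2 = dotv (usubmx w) (usubmx w) + `|ldot w|.
Proof.
rewrite /normv sqr_sqrtr; last by rewrite addr_ge0 ?sqr_ge0.
by rewrite norm2_sqr ldotE.
Qed.

Lemma normv_ge0 w : 0 <= normv v w.
Proof. exact: sqrtr_ge0. Qed.

Lemma normvN w : normv v (- w) = normv v w.
Proof.
rewrite /normv !norm2_sqr -!ldotE -scaleN1r ldotZ mulN1r normrN.
rewrite (_ : usubmx (-1 *: w) = - usubmx w); last by apply/matrixP => i j; rewrite !mxE mulN1r.
by rewrite dotvNl dotvNr opprK.
Qed.

(* [normv v] is 1-homogeneous in the first block but only 1/2-homogeneous in the last one. *)
Lemma normv_scale_le w t : 0 <= t <= 1 -> t * normv v w <= normv v (t *: w).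
Proof.
move=> /andP[t0 t1].
rewrite -ler_sqr ?nnegrE ?mulr_ge0 ?normv_ge0 // exprMn !normv_sqr ldotZ.
rewrite (_ : usubmx (t *: w) = t *: usubmx w); last by apply/matrixP => i j; rewrite !mxE.
rewrite dotvZl dotvZr normrM ger0_norm // mulrA -expr2 mulrDr lerD2l.
by rewrite expr2 -mulrA ler_piMl ?mulr_ge0.
Qed.

Lemma normv_eq0 w : normv v w = 0 -> w = 0.
Proof.
move=> /(congr1 (fun r => r ^+ 2)); rewrite expr0n normv_sqr /=.
have := dotvv_ge0 (usubmx w); have := normr_ge0 (ldot w) => l0 d0 s0.
have /dotvv_eq0 u0 : dotv (usubmx w) (usubmx w) = 0 by lra.
have /normr0_eq0 : `|ldot w| = 0 by lra.
rewrite -[w]vsubmxK u0 ldot_col_mx dotv0r add0r => d00.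
rewrite (_ : dsubmx w = 0) ?col_mx0 //.
by apply/matrixP => i j; rewrite !ord1 d00 mxE.
Qed.

End NormV.

(** * Minima of continuous functions on the simplex *)

Section Continuity.
Variables (R : realType) (T : topologicalType).
Implicit Types f g : T -> R.

Lemma cont_add f g : continuous f -> continuous g -> continuous (fun t => f t + g t).
Proof. by move=> cf cg t; exact: cvgD (cf t) (cg t). Qed.

Lemma cont_mul f g : continuous f -> continuous g -> continuous (fun t => f t * g t).
Proof. by move=> cf cg t; exact: cvgM (cf t) (cg t). Qed.

Lemma cont_opp f : continuous f -> continuous (fun t => - f t).
Proof. by move=> cf t; exact: cvgN (cf t). Qed.

Lemma cont_norm f : continuous f -> continuous (fun t => `|f t|).
Proof. by move=> cf t; exact: cvg_norm (cf t). Qed.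

Lemma cont_sum (I : Type) (r : seq I) (P : pred I) (F : I -> T -> R) :
  (forall i, continuous (F i)) -> continuous (fun t => \sum_(i <- r | P i) F i t).
Proof.
move=> cF; elim: r => [|i r IH]; first by under eq_fun do rewrite big_nil; apply: cst_continuous.
under eq_fun do rewrite big_cons.
by case: (P i) => //; apply: cont_add.
Qed.

End Continuity.

Section Compactness.
Variables (R : realType) (N : nat).
Implicit Types (s : R) (E phi : 'rV[R]_N -> R).

Definition scaled_simplex_zeros s E : set 'rV[R]_N :=
  [set y : 'rV[R]_N | [/\ (forall i, 0 <= y 0 i), \sum_i y 0 i = s & E y = 0]].

Lemma closed_scaled_simplex_zeros s E : continuous E -> closed (scaled_simplex_zeros s E).
Proof.
move=> cE.
have -> : scaled_simplex_zeros s E =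
  \bigcap_(i in setT) ((fun y : 'rV[R]_N => y 0 i) @^-1` [set r | 0 <= r]) `&`
  ((fun y : 'rV[R]_N => \sum_i y 0 i) @^-1` [set s] `&` E @^-1` [set 0]).
  apply/seteqP; split => y /=; first by case=> y0 y1 y2; do !split => // i _; apply: y0.
  by case=> y0 [y1 y2]; split => // i; apply: y0.
have pre (f : 'rV[R]_N -> R) D : continuous f -> closed D -> closed (f @^-1` D).
  by move=> cf; apply: preimage_closed => y _; apply: cf.
have ccoord i : continuous (fun y : 'rV[R]_N => y 0 i) by move=> y; apply: coord_continuous.
apply: closedI; first by apply: closed_bigI => i _; apply: pre; [exact: ccoord | exact: closed_ge].
by apply: closedI; apply: pre; [exact: cont_sum | exact: closed_eq | exact: cE | exact: closed_eq].
Qed.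

Lemma scaled_simplex_zeros_min s E phi : continuous E -> continuous phi ->
  scaled_simplex_zeros s E !=set0 ->
  exists2 y, scaled_simplex_zeros s E y &
    forall y', scaled_simplex_zeros s E y' -> phi y <= phi y'.
Proof.
move=> cE cphi [y1 Ky1].
have s0 : 0 <= s by case: Ky1 => y00 <- _; apply: sumr_ge0.
have Kbox y : scaled_simplex_zeros s E y -> forall i, 0 <= y 0 i <= s.
  by case=> ge0 <- _ i; rewrite ge0 (bigD1 i) //= lerDl sumr_ge0.
have cK : compact (scaled_simplex_zeros s E).
  apply: bounded_closed_compact; last exact: closed_scaled_simplex_zeros.
  exists s; split; first by rewrite realE s0.
  move=> M sM y Ky /=; apply: le_trans (ltW sM).
  rewrite (_ : `|y| = mx_norm y) // mx_normrE; apply/bigmax_leP; split => // -[i j] _ /=.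
  by rewrite ord1; have /andP[y0i ys] := Kbox y Ky j; rewrite ger0_norm.
have [c /set_mem Kc cmin] := EVT_min_rV (ex_intro _ y1 Ky1) cK (continuous_subspaceT cphi).
by exists c => // y Ky; apply/cmin/mem_set.
Qed.

End Compactness.

Section SimplexMin.
Variables (R : realType) (n : nat).

Lemma cont_mulmx_trmx k (M : 'M[R]_(k, n)) i : continuous (fun y : 'rV[R]_n => (M *m y^T) i 0).
Proof.
have -> : (fun y : 'rV[R]_n => (M *m y^T) i 0) = (fun y => \sum_j M i j * y 0 j).
  by apply: funext => y; rewrite mxE; apply: eq_bigr => j _; rewrite mxE.
by apply: cont_sum => j; apply: cont_mul => [|y]; [apply: cst_continuous | apply: coord_continuous].
Qed.

Lemma cont_dotv_mulmx_trmx k (M M' : 'M[R]_(k, n)) :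
  continuous (fun y : 'rV[R]_n => dotv (M *m y^T) (M' *m y^T)).
Proof. by apply: cont_sum => i; apply: cont_mul; apply: cont_mulmx_trmx. Qed.

Lemma scaled_simplex_zerosT (E : 'cV[R]_n -> R) (y : 'rV[R]_n) :
  scaled_simplex_zeros 1 (fun y => E y^T) y <-> simplex n y^T /\ E y^T = 0.
Proof.
have yE i : y^T i 0 = y 0 i by rewrite mxE.
have sumE : \sum_i y^T i 0 = \sum_i y 0 i by apply: eq_bigr => i _; rewrite yE.
rewrite /simplex /= sumE; split=> [[y0 y1 Ey]|[[y0 y1] Ey]].
  by split=> //; split=> // i; rewrite yE.
by split => // i; rewrite -yE.
Qed.

Lemma simplex_zeros_min (E phi : 'cV[R]_n -> R) :
  continuous (fun y : 'rV[R]_n => E y^T) -> continuous (fun y : 'rV[R]_n => phi y^T) ->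
  (exists x, simplex n x /\ E x = 0) ->
  exists2 x, simplex n x /\ E x = 0 & forall x', simplex n x' /\ E x' = 0 -> phi x <= phi x'.
Proof.
move=> cE cphi [x Kx].
have [|y /scaled_simplex_zerosT Ky ymin] := @scaled_simplex_zeros_min R n 1 _ _ cE cphi.
  by exists x^T; apply/scaled_simplex_zerosT; rewrite trmxK.
exists y^T => // x' Kx'; rewrite -(trmxK x'); apply/ymin/scaled_simplex_zerosT.
by rewrite trmxK.
Qed.

End SimplexMin.

(** * The quadratic objective *)

Section Objective.
Variables (R : realType) (m n : nat) (P : 'M[R]_(m, n)) (B : 'M[R]_(1, n)).
Implicit Types x y z : 'cV[R]_n.

Definition Abar : 'M[R]_(m + 1, n) := col_mx P (2%:R *: B).

Definition obj x : R := 2^-1 * dotv (P *m x) (P *m x) + (B *m x) 0 0.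

Lemma objE x : obj x = 2^-1 * dotv (P *m x) (P *m x) + (B *m x) 0 0.
Proof. by []. Qed.

Lemma Abar_mul x : Abar *m x = col_mx (P *m x) (2%:R *: (B *m x)).
Proof. by rewrite mul_col_mx scalemxAl. Qed.

Lemma Abar_mul_inj x y : Abar *m x = Abar *m y -> P *m x = P *m y /\ B *m x = B *m y.
Proof.
rewrite !Abar_mul => /eq_col_mx[-> /matrixP e]; split => //.
by apply/matrixP => i j; move: (e i j); rewrite !mxE => /mulfI; apply; rewrite pnatr_eq0.
Qed.

Lemma obj_Abar x y : Abar *m x = Abar *m y -> obj x = obj y.
Proof. by move/Abar_mul_inj => [Pxy Bxy]; rewrite /obj Pxy Bxy. Qed.

Lemma cont_obj : continuous (fun y : 'rV[R]_n => obj y^T).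
Proof.
apply: cont_add; last exact: cont_mulmx_trmx.
by apply: cont_mul => [y|]; [apply: cst_continuous | apply: cont_dotv_mulmx_trmx].
Qed.

Lemma obj_has_min : (exists x, simplex n x) ->
  exists2 x0, simplex n x0 & forall x, simplex n x -> obj x0 <= obj x.
Proof.
move=> [x sx].
have [|x0 [sx0 _] x0min] :=
  @simplex_zeros_min R n (fun _ => 0) obj (@cst_continuous _ _ _) cont_obj.
  by exists x.
by exists x0 => // x' sx'; apply: x0min.
Qed.

Lemma obj_convex_comb x y t : obj (t *: x + (1 - t) *: y) =
  t * obj x + (1 - t) * obj y - t * (1 - t) / 2%:R * dotv (P *m x - P *m y) (P *m x - P *m y).
Proof.
rewrite /obj !mulmxDr -!scalemxAr !(dotvDl, dotvDr, dotvZl, dotvZr, dotvNl, dotvNr) !mxE.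
by rewrite (dotvC (P *m y)); field.
Qed.

(* Strict convexity of [obj] in the variable [P *m x]. *)
Lemma obj_min_mulP x y : simplex n x -> simplex n y ->
  (forall z, simplex n z -> obj y <= obj z) -> obj x <= obj y -> P *m x = P *m y.
Proof.
move=> sx sy ymin xy.
have := ymin _ (simplex_convex sx sy (t := 2^-1) _); rewrite obj_convex_comb.
have := dotvv_ge0 (P *m x - P *m y); set D := dotv _ _ => D0 mid.
have /dotvv_eq0/eqP : D = 0.
  by apply/eqP; rewrite eq_le D0 andbT; have := mid (introT andP (conj _ _)); lra.
by rewrite subr_eq0 => /eqP.
Qed.

End Objective.

Section Minimizer.
Variables (R : realType) (m n : nat) (P : 'M[R]_(m, n)) (B : 'M[R]_(1, n)).
Variable x0 : 'cV[R]_n.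
Hypothesis sx0 : simplex n x0.
Hypothesis x0min : forall x, simplex n x -> obj P B x0 <= obj P B x.
Implicit Types x y z : 'cV[R]_n.

Local Notation obj := (obj P B).
Local Notation Abar := (Abar P B).

Definition grad : 'rV[R]_n := (P *m x0)^T *m P + B.

Definition dobj x : R := (grad *m x) 0 0.

Definition vstar : 'cV[R]_m := 2%:R *: (P *m x0).

Lemma dobjE x : dobj x = dotv (P *m x0) (P *m x) + (B *m x) 0 0.
Proof. by rewrite /dobj mulmxDl mxE -mulmxA -dotvE. Qed.

Lemma dobjD x y : dobj (x + y) = dobj x + dobj y.
Proof. by rewrite /dobj mulmxDr mxE. Qed.

Lemma dobjZ x a : dobj (a *: x) = a * dobj x.
Proof. by rewrite /dobj -scalemxAr mxE. Qed.

Lemma dobjB x y : dobj (x - y) = dobj x - dobj y.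
Proof. by rewrite dobjD -scaleN1r dobjZ mulN1r. Qed.

Lemma ldot_Abar x : ldot vstar (Abar *m x) = 2%:R * dobj x.
Proof. by rewrite Abar_mul ldot_col_mx dobjE /vstar dotvZl mxE mulrDr. Qed.

Lemma obj_sub_min x : obj x - obj x0 =
  2^-1 * dotv (P *m x - P *m x0) (P *m x - P *m x0) + (dobj x - dobj x0).
Proof.
rewrite !dobjE !objE !(dotvDl, dotvDr, dotvNl, dotvNr) (dotvC (P *m x)).
by field.
Qed.

Lemma dobj_min x : simplex n x -> dobj x0 <= dobj x.
Proof.
move=> sx; rewrite leNgt; apply/negP => lt_x.
set D := dobj x0 - dobj x; have D0 : 0 < D by rewrite subr_gt0.
set K := dotv (P *m x - P *m x0) (P *m x - P *m x0); have K0 : 0 <= K by apply: dotvv_ge0.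
have KD0 : 0 < K + D by lra.
set t := D / (K + D).
have t0 : 0 < t by apply: divr_gt0.
have tKD : t * (K + D) = D by rewrite divfK ?gt_eqF.
have t1 : t <= 1 by rewrite ler_pdivrMr // mul1r; lra.
have := x0min (simplex_convex sx sx0 (t := t) _); rewrite (ltW t0) t1 => /(_ isT).
rewrite -subr_ge0 obj_sub_min.
have -> : P *m (t *: x + (1 - t) *: x0) - P *m x0 = t *: (P *m x - P *m x0).
  by rewrite mulmxDr -!scalemxAr; apply/matrixP => i j; rewrite !mxE; ring.
rewrite dobjD !dobjZ dotvZl dotvZr -/K => h.
have : 0 <= t * (t * K / 2%:R - D) by move: h; rewrite /D; lra.
rewrite pmulr_rge0 // => h'; nra.
Qed.

Lemma obj_level z : simplex n z -> obj z = obj x0 -> P *m z = P *m x0 /\ B *m z = B *m x0.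
Proof.
move=> sz zx0.
have Pz : P *m z = P *m x0 by apply: obj_min_mulP x0min _; rewrite ?zx0.
split=> //; apply/matrixP => i j; rewrite !ord1.
by move: zx0; rewrite !objE Pz => /addrI.
Qed.

Lemma dobj_level z : simplex n z -> obj z = obj x0 -> dobj z = dobj x0.
Proof. by move=> sz /(obj_level sz)[Pz Bz]; rewrite !dobjE Pz Bz. Qed.

Lemma normv_Abar_level x z : simplex n x -> simplex n z -> obj z = obj x0 ->
  normv vstar (Abar *m x - Abar *m z) ^+ 2 = 2%:R * (obj x - obj x0).
Proof.
move=> sx sz zx0; have [Pz _] := obj_level sz zx0.
rewrite normv_sqr -mulmxBr ldot_Abar dobjB Abar_mul col_mxKu mulmxBr Pz.
rewrite (dobj_level sz zx0) ger0_norm; last by rewrite mulr_ge0 ?subr_ge0 ?dobj_min.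
by rewrite obj_sub_min; field.
Qed.

Lemma ldot_conv (w : 'cV[R]_(m + 1)) : conv Abar w -> 2%:R * dobj x0 <= ldot vstar w.
Proof. by move=> [x sx ->]; rewrite ldot_Abar ler_pM2l ?dobj_min. Qed.

Lemma FvE (w : 'cV[R]_(m + 1)) : Fv vstar Abar w <-> conv Abar w /\ ldot vstar w = 2%:R * dobj x0.
Proof.
split=> [[cw wmin]|[cw lw]]; last by split=> // w' /ldot_conv; rewrite -lw.
split=> //; apply/eqP; rewrite eq_le ldot_conv // andbT.
have : ldot vstar w <= ldot vstar (Abar *m x0) := wmin _ (ex_intro2 _ _ x0 sx0 erefl).
by rewrite ldot_Abar.
Qed.

Lemma dobj_nonneg (w : 'cV[R]_n) : (forall i, 0 <= w i 0) -> (\sum_i w i 0) * dobj x0 <= dobj w.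
Proof.
move=> w0; rewrite [dobj w]/dobj mxE mulr_suml; apply: ler_sum => i _.
rewrite mulrC ler_wpM2r //.
have <- : dobj (delta_mx i 0) = grad 0 i by rewrite /dobj -colE mxE.
exact/dobj_min/simplex_delta.
Qed.

End Minimizer.

(** * Minimal faces *)

Section ExposedFace.
Variables (R : realType) (k n : nat) (M : 'M[R]_(k, n)) (c : 'cV[R]_k).
Implicit Types y q : 'cV[R]_k.

Local Notation F := (argmin (dotv c) (conv M)).

Lemma argmin_split y1 y2 t : conv M y1 -> conv M y2 -> 0 < t < 1 ->
  F (t *: y1 + (1 - t) *: y2) -> F y1 /\ F y2.
Proof.
move=> c1 c2 /andP[t0 t1] [_ ymin].
have := ymin _ c1; have := ymin _ c2; rewrite !(dotvDr, dotvZr) => h2 h1.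
have d1 : dotv c y1 <= dotv c y2 by nra.
have d2 : dotv c y2 <= dotv c y1 by nra.
by split; split=> // y' /ymin; rewrite !(dotvDr, dotvZr); nra.
Qed.

(* The smallest face of [conv M] containing [q]: the points [y] such that [q] lies in the
   relative interior of a segment of [conv M] through [y]. *)
Definition minface q : set 'cV[R]_k :=
  [set y | conv M y /\ exists2 e, 0 < e & conv M (q + e *: (q - y))].

Lemma minface_self q : conv M q -> minface q q.
Proof. by move=> cq; split=> //; exists 1 => //; rewrite subrr scaler0 addr0. Qed.

Lemma minface_conv q y : minface q y -> conv M q.
Proof.
move=> [cy [e e0 cr]].
have t01 : 0 <= (1 + e)^-1 <= 1.
  by apply/andP; split; [rewrite invr_ge0 | rewrite invf_le1]; lra.
have := conv_convex cr cy t01; congr conv.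
by apply/matrixP => i j; rewrite !mxE; field; lra.
Qed.

Lemma minface_convex q y1 y2 t : minface q y1 -> minface q y2 -> 0 <= t -> t <= 1 ->
  minface q (t *: y1 + (1 - t) *: y2).
Proof.
move=> G1 G2 t0 t1; have cq := minface_conv G1.
move: G1 G2 => [c1 [e1 e10 r1]] [c2 [e2 e20 r2]].
split; first by apply: conv_convex; rewrite ?t0.
set e := Num.min e1 e2; exists e; first by rewrite lt_min e10 e20.
have shrink yk ek : 0 < ek -> e <= ek -> conv M (q + ek *: (q - yk)) ->
    conv M (q + e *: (q - yk)).
  move=> ek0 eek crk; have e0 : 0 < e by rewrite lt_min e10 e20.
  have := conv_convex crk cq (divr_in01 (ltW e0) eek ek0); congr conv.
  by apply/matrixP => i j; rewrite !mxE; field; lra.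
have ee1 : e <= e1 by rewrite ge_min lexx.
have ee2 : e <= e2 by rewrite ge_min lexx orbT.
have := conv_convex (shrink _ _ e10 ee1 r1) (shrink _ _ e20 ee2 r2) (t := t).
rewrite t0 t1 => /(_ isT); congr conv.
by apply/matrixP => i j; rewrite !mxE; ring.
Qed.

Lemma minface_extreme q y1 y2 t : conv M y1 -> conv M y2 -> 0 < t -> t < 1 ->
  minface q (t *: y1 + (1 - t) *: y2) -> minface q y1.
Proof.
move=> c1 c2 t0 t1 G; have cq := minface_conv G; move: G => [cy [e e0 cr]].
split=> //; exists (t * e / (1 + e)); first by rewrite divr_gt0 ?mulr_gt0 //; lra.
have a0 : 0 <= (1 + e)^-1 by rewrite invr_ge0; lra.
have b0 : 0 <= e * (1 - t) / (1 + e) by rewrite divr_ge0 ?mulr_ge0; lra.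
have ab1 : (1 + e)^-1 + e * (1 - t) / (1 + e) <= 1.
  have -> : (1 + e)^-1 + e * (1 - t) / (1 + e) = (1 + e * (1 - t)) / (1 + e).
    by field; lra.
  by rewrite ler_pdivrMr ?mul1r; nra.
have := conv_convex3 cr c2 cq a0 b0 ab1; congr conv.
by apply/matrixP => i j; rewrite !mxE; field; lra.
Qed.

Lemma minface_sub_argmin q : F q -> minface q `<=` F.
Proof.
move=> [cq qmin] y [cy [e e0 cr]]; split=> // y' /qmin; apply: le_trans.
have := qmin _ cr; rewrite dotvDr dotvZr dotvBr -subr_ge0 addrC addKr pmulr_rge0 //.
by rewrite subr_ge0.
Qed.

Lemma is_face_minface q : F q -> is_face F (minface q).
Proof.
move=> Fq; split=> [|y1 y2 t|y1 y2 t [c1 _] [c2 _] t0 t1 G].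
- exact: minface_sub_argmin.
- exact: minface_convex.
split; first exact: minface_extreme G.
apply: (minface_extreme (y2 := y1) (t := 1 - t)) => //; try lra.
by rewrite (_ : 1 - (1 - t) = t) 1?addrC //; ring.
Qed.

End ExposedFace.

(** * The optimal point closest to a non-optimal one *)

Section PosPart.
Variables (R : realType) (n : nat).
Implicit Types u : 'cV[R]_n.

Definition pospart u : 'cV[R]_n := map_mx (fun a => Num.max a 0) u.

Lemma pospart_ge0 u i : 0 <= pospart u i 0.
Proof. by rewrite mxE le_max lexx orbT. Qed.

Lemma pospartE u : u = pospart u - pospart (- u).
Proof.
have maxE (t : R) : t = Num.max t 0 - Num.max (- t) 0.
  by case: (leP t 0) => h; case: (leP (- t) 0) => h'; lra.
by apply/matrixP => i j; rewrite !mxE -maxE.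
Qed.

Lemma norm1_pospart u : norm1 u = \sum_i pospart u i 0 + \sum_i pospart (- u) i 0.
Proof.
have maxE (t : R) : `|t| = Num.max t 0 + Num.max (- t) 0.
  case: (leP 0 t) => t0; [rewrite ger0_norm | rewrite ltr0_norm] => //;
  by case: (leP t 0) => h; case: (leP (- t) 0) => h'; lra.
by rewrite /norm1 -big_split; apply: eq_bigr => i _; rewrite !mxE maxE.
Qed.

Lemma sum_pospart_simplex x y : simplex n x -> simplex n y ->
  \sum_i pospart (y - x) i 0 = \sum_i pospart (x - y) i 0.
Proof.
move=> [_ x1] [_ y1].
have : \sum_i (x - y) i 0 = 0 by under eq_bigr do rewrite !mxE; rewrite sumrB x1 y1 subrr.
rewrite (eq_bigr (fun i => pospart (x - y) i 0 - pospart (y - x) i 0)) ?sumrB; first lra.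
by move=> i _; rewrite {1}[x - y]pospartE opprB !mxE.
Qed.

End PosPart.

Lemma pospart_sub_le (R : realType) n (x y : 'cV[R]_n) i :
  0 <= x i 0 -> 0 <= y i 0 -> pospart (x - y) i 0 <= x i 0.
Proof. by move=> x0 y0; rewrite !mxE ge_max x0 andbT lerBlDr lerDl. Qed.

Section PhiBound.
Variables (R : realType) (m n : nat) (v : 'cV[R]_m) (M : 'M[R]_(m + 1, n)).

Definition admissible_face (G : set 'cV[R]_(m + 1)) :=
  [/\ is_face (Fv v M) G, G <> set0 & G <> conv M].

Lemma distv_ge0 (F G : set 'cV[R]_(m + 1)) : 0 <= distv v F G.
Proof. by apply: inf_ge0 => r [w _ [w' _ ->]]; apply: normv_ge0. Qed.

Lemma Phi_ge0 : 0 <= Phi v M.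
Proof. by apply: inf_ge0 => r [G _ ->]; apply: distv_ge0. Qed.

Lemma Phi_le G w w' : admissible_face G -> G w -> conv_compl M G w' -> Phi v M <= normv v (w - w').
Proof.
move=> aG Gw cw'; apply: (@le_trans _ _ (distv v G (conv_compl M G))).
  by apply: inf_le_nonneg => [r [G' _ ->]|]; [apply: distv_ge0 | exists G].
apply: inf_le_nonneg => [r [? _ [? _ ->]]|]; first exact: normv_ge0.
by exists w => //; exists w'.
Qed.

End PhiBound.

Section ClosestPoint.
Variables (R : realType) (m n : nat) (P : 'M[R]_(m, n)) (B : 'M[R]_(1, n)).
Variable x0 : 'cV[R]_n.
Hypothesis sx0 : simplex n x0.
Hypothesis x0min : forall x, simplex n x -> obj P B x0 <= obj P B x.

Variables x z : 'cV[R]_n.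
Hypothesis sx : simplex n x.
Hypothesis sz : simplex n z.
Hypothesis z_level : obj P B z = obj P B x0.
Hypothesis x_level : obj P B x <> obj P B x0.
Hypothesis zmin : forall z', simplex n z' -> obj P B z' = obj P B x0 ->
  norm1 (x - z) <= norm1 (x - z').

Local Notation Abar := (Abar P B).
Local Notation vstar := (vstar P x0).
Local Notation dp := (pospart (x - z)).
Local Notation dn := (pospart (z - x)).
Local Notation mass := (\sum_i dp i 0).
Local Notation cdp := (mass^-1 *: dp).
Local Notation cdn := (mass^-1 *: dn).
Local Notation q := (Abar *m cdn).

Lemma sum_dn : \sum_i dn i 0 = mass.
Proof. exact: sum_pospart_simplex. Qed.

Lemma norm1_mass : norm1 (x - z) = 2%:R * mass.
Proof. by rewrite norm1_pospart opprB sum_dn mulr2n mulrDl mul1r. Qed.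

Lemma dp_le i : dp i 0 <= x i 0.
Proof. by case: sx sz => [x_ge0 _] [z_ge0 _]; apply: pospart_sub_le. Qed.

Lemma dn_le i : dn i 0 <= z i 0.
Proof. by case: sx sz => [x_ge0 _] [z_ge0 _]; apply: pospart_sub_le. Qed.

Lemma mass_le1 : mass <= 1.
Proof. by case: sx => _ <-; apply: ler_sum => i _; apply: dp_le. Qed.

Lemma exists_dp_pos : exists j, 0 < dp j 0.
Proof.
apply/not_existsP => dp_npos.
have dp0 i : dp i 0 = 0.
  by apply/eqP; rewrite eq_le pospart_ge0 andbT leNgt; apply/negP/dp_npos.
have dn0 i : dn i 0 = 0.
  have : \sum_i dn i 0 = 0 by rewrite sum_dn big1.
  by move/psumr_eq0P; apply=> // k _; apply: pospart_ge0.
have /eqP : x - z = 0.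
  rewrite [x - z]pospartE opprB; apply/matrixP => i k.
  by have := dp0 i; have := dn0 i; rewrite ord1 !mxE => -> ->; rewrite subrr.
by rewrite subr_eq0 => /eqP xz; apply: x_level; rewrite xz.
Qed.

Lemma dp_le_mass i : dp i 0 <= mass.
Proof. by rewrite (bigD1 i) //= lerDl; apply: sumr_ge0 => k _; apply: pospart_ge0. Qed.

Lemma mass_gt0 : 0 < mass.
Proof. by have [j dpj] := exists_dp_pos; apply: lt_le_trans dpj (dp_le_mass j). Qed.

Lemma simplex_cdp : simplex n cdp.
Proof. by apply: simplex_normalize; [apply: pospart_ge0 | apply: mass_gt0]. Qed.

Lemma simplex_cdn : simplex n cdn.
Proof.
by rewrite -sum_dn; apply: simplex_normalize; [apply: pospart_ge0 | rewrite sum_dn mass_gt0].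
Qed.

(* [z] minus its excess over [x] keeps weight [1 - mass]; first-order optimality of [z]
   then forces [cdn] to be optimal for the linearization. *)
Lemma Fv_q : Fv vstar Abar q.
Proof.
apply/(FvE sx0 x0min); split; first by exists cdn; first exact: simplex_cdn.
rewrite ldot_Abar; congr (_ * _); apply/eqP.
rewrite eq_le (dobj_min sx0 x0min simplex_cdn) andbT.
have zE : z = (z - dn) + mass *: cdn by rewrite scalerA divff ?gt_eqF ?mass_gt0 // scale1r subrK.
have rest : (1 - mass) * dobj P B x0 x0 <= dobj P B x0 (z - dn).
  have -> : 1 - mass = \sum_i (z - dn) i 0.
    by under [RHS]eq_bigr do rewrite mxBE; rewrite sumrB sum_dn; case: sz => _ ->.
  by apply: (dobj_nonneg sx0 x0min) => i; rewrite mxBE subr_ge0 dn_le.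
have := dobj_level sx0 x0min sz z_level; rewrite {1}zE dobjD dobjZ => zdobj.
have m0 := mass_gt0; rewrite -(ler_pM2l m0); nra.
Qed.

Lemma competitor_simplex w s : simplex n w -> 0 <= s <= mass -> simplex n (z + s *: (w - cdn)).
Proof.
case=> w0 w1 /andP[s0 sm]; case: sz => z0 z1; have m0 := mass_gt0; split=> [i|].
  rewrite mxDE mxZE mxBE mxZE.
  have : s * mass^-1 * dn i 0 <= dn i 0.
    by apply: ler_piMl; [apply: pospart_ge0 | rewrite ler_pdivrMr // mul1r].
  have : 0 <= s * w i 0 by rewrite mulr_ge0.
  have := dn_le i; lra.
under eq_bigr do rewrite mxDE mxZE mxBE mxZE.
rewrite big_split /= -mulr_sumr sumrB -mulr_sumr sum_dn mulVf ?gt_eqF // w1 z1.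
by rewrite subrr mulr0 addr0.
Qed.

Lemma competitor_Abar w s : Abar *m w = q -> Abar *m (z + s *: (w - cdn)) = Abar *m z.
Proof. by move=> wE; rewrite mulmxDr -scalemxAr mulmxBr wE subrr scaler0 addr0. Qed.

(* If the column [j] of an excess coordinate were in the minimal face of [q], [z] could move
   part of its excess over [x] onto [j] without moving [Abar *m z], getting closer to [x]. *)
Lemma excess_col_notin_minface j : 0 < dp j 0 -> ~ minface Abar q (col j Abar).
Proof.
move=> dpj [_ [e e0 [rho srho rhoE]]].
set s := dp j 0; set t := (1 + e)^-1.
have m0 := mass_gt0; have sm := dp_le_mass j.
have t0 : 0 < t by rewrite invr_gt0; lra.
have t1 : t < 1 by rewrite invf_lt1; lra.
set w := t *: rho + (1 - t) *: delta_mx j 0.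
have wE : Abar *m w = q.
  have comb (a b : 'cV[R]_(m + 1)) : t *: (a + e *: (a - b)) + (1 - t) *: b = a.
    by apply/matrixP => i k; rewrite !mxE /t; field; lra.
  by rewrite mulmxDr -2![Abar *m (_ *: _)]scalemxAr -colE -rhoE comb.
set z' := z + s *: (w - cdn).
have sz' : simplex n z'.
  apply: competitor_simplex; last by rewrite (ltW dpj) sm.
  by apply: simplex_convex => //; [exact: simplex_delta | rewrite (ltW t0) (ltW t1)].
have := zmin sz'; rewrite (obj_Abar (competitor_Abar _ wE)) => /(_ z_level).
have -> : x - z' = (dp - (s * (1 - t)) *: delta_mx j 0) - (dn - s *: cdn) - (s * t) *: rho.
  rewrite /z' opprD addrA {1}[x - z]pospartE opprB /w.
  by apply/matrixP => i k; rewrite !mxE; ring.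
have n1 : norm1 (dp - (s * (1 - t)) *: delta_mx j 0) = mass - s * (1 - t).
  apply: norm1_sub_delta => [i|]; first exact: pospart_ge0.
  apply/andP; split; first by apply: mulr_ge0; rewrite ?subr_ge0 ltW.
  by rewrite -/s ger_pMr // lerBlDr lerDl ltW.
have n2 : norm1 (dn - s *: cdn) = mass - s.
  rewrite scalerA -{1}[dn]scale1r -scalerBl norm1Z norm1_nonneg ?sum_dn => [|i]; last first.
    exact: pospart_ge0.
  by rewrite ger0_norm ?mulrBl ?mul1r ?divfK ?gt_eqF // subr_ge0 ler_pdivrMr ?mul1r.
have n3 : norm1 ((s * t) *: rho) = s * t.
  by rewrite norm1Z norm1_simplex // mulr1 ger0_norm // mulr_ge0 ?ltW.
have := norm1B (dp - (s * (1 - t)) *: delta_mx j 0 - (dn - s *: cdn)) ((s * t) *: rho).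
have := norm1B (dp - (s * (1 - t)) *: delta_mx j 0) (dn - s *: cdn).
rewrite norm1_mass n1 n2 n3; have : 0 < s * (1 - t) by rewrite mulr_gt0 // subr_gt0.
lra.
Qed.

Lemma minface_q_admissible : admissible_face vstar Abar (minface Abar q).
Proof.
have Fq := Fv_q; split.
- exact: is_face_minface.
- by move=> G0; have := minface_self (proj1 Fq); rewrite G0.
- move=> Gc; have [j dpj] := exists_dp_pos.
  by apply: (excess_col_notin_minface dpj); rewrite Gc; apply: conv_col.
Qed.

Lemma exists_admissible_face : exists G, admissible_face vstar Abar G.
Proof. by exists (minface Abar q); apply: minface_q_admissible. Qed.

Lemma cdp_compl : conv_compl Abar (minface Abar q) (Abar *m cdp).
Proof.
exists cdp => //; split=> [|i Gi]; first exact: simplex_cdp.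
rewrite mxZE; have := pospart_ge0 (x - z) i; rewrite le_eqVlt => /orP[/eqP <-|dpi].
  by rewrite mulr0.
by case: (excess_col_notin_minface dpi).
Qed.

Lemma closest_point_bound :
  Phi vstar Abar ^+ 2 / 4%:R <= 2%:R * (obj P B x - obj P B x0) / norm1 (x - z) ^+ 2.
Proof.
have m0 := mass_gt0.
have PhiE : Phi vstar Abar <= normv vstar (q - Abar *m cdp).
  by apply: Phi_le minface_q_admissible (minface_self _) cdp_compl; case: Fv_q.
have xzE : Abar *m x - Abar *m z = mass *: - (q - Abar *m cdp).
  have xz : x - z = mass *: (cdp - cdn).
    by rewrite scalerBr !scalerA divff ?gt_eqF // !scale1r {1}[x - z]pospartE opprB.
  by rewrite -mulmxBr {1}xz -scalemxAr mulmxBr opprB.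
have := normv_Abar_level sx0 x0min sx sz z_level; rewrite xzE => gapE.
have : mass * normv vstar (q - Abar *m cdp) <= normv vstar (mass *: - (q - Abar *m cdp)).
  by rewrite -(normvN _ (q - _)); apply: normv_scale_le; rewrite ltW //= mass_le1.
rewrite -(ler_sqr (mulr_ge0 (ltW m0) (normv_ge0 _ _)) (normv_ge0 _ _)) gapE norm1_mass => gap.
rewrite ler_pdivlMr ?exprn_gt0 ?mulr_gt0 //; apply: le_trans gap.
have -> : Phi vstar Abar ^+ 2 / 4%:R * (2%:R * mass) ^+ 2 = (mass * Phi vstar Abar) ^+ 2.
  by field.
rewrite ler_sqr ?nnegrE; last by rewrite mulr_ge0 ?normv_ge0 ?ltW.
  by rewrite ler_pM2l.
by rewrite mulr_ge0 ?Phi_ge0 ?ltW.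
Qed.

End ClosestPoint.

(** * Positivity of [Phi] *)

Section FaceSupport.
Variables (R : realType) (k n : nat) (M : 'M[R]_(k, n)) (c : 'cV[R]_k).
Variable G : set 'cV[R]_k.
Hypothesis faceG : is_face (argmin (dotv c) (conv M)) G.

Definition suppv (x : 'cV[R]_n) : {set 'I_n} := finset (fun i => x i 0 != 0).

Lemma in_suppv x i : (i \in suppv x) = (x i 0 != 0).
Proof. by rewrite inE. Qed.

Lemma mulmx_peel (x : 'cV[R]_n) i x' :
  x = x i 0 *: delta_mx i 0 + (1 - x i 0) *: x' ->
  M *m x = x i 0 *: col i M + (1 - x i 0) *: (M *m x').
Proof. by move=> {1}->; rewrite mulmxDr -!scalemxAr colE. Qed.

Lemma face_col x i : G (M *m x) -> simplex n x -> 0 < x i 0 -> G (col i M).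
Proof.
case: faceG => sub _ ext Gx sx xi0.
have [xi1|xi1] := eqVneq (x i 0) 1; first by rewrite colE -(simplex_eq_delta sx xi1).
have xi01 : 0 < x i 0 < 1 by rewrite xi0 lt_neqAle xi1 simplex_le1.
have [x' sx' [xE _ _]] := simplex_peel sx xi01.
have cx' : conv M (M *m x') by exists x'.
move: Gx (Gx); rewrite (mulmx_peel xE) => Gx /sub /(argmin_split (conv_col M i) cx' xi01) [Fi Fx'].
by case: (ext _ _ _ Fi Fx' xi0 (proj2 (andP xi01)) Gx).
Qed.

Lemma face_mulmx x : simplex n x -> (forall i, x i 0 != 0 -> G (col i M)) -> G (M *m x).
Proof.
case: faceG => _ cvx _.
have [N] : exists N, (#|suppv x| <= N)%N by eexists.
elim: N x => [|N IH] x.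
  rewrite leqn0 => /eqP/cards0_eq supp0 /simplex_has_pos[i xi0].
  have : i \in suppv x by rewrite in_suppv gt_eqF.
  by rewrite supp0 inE.
move=> suppN sx Gcols; have [i xi0] := simplex_has_pos sx.
have [xi1|xi1] := eqVneq (x i 0) 1.
  by rewrite (simplex_eq_delta sx xi1) -colE; apply: Gcols; rewrite xi1 oner_eq0.
have xi01 : 0 < x i 0 < 1 by rewrite xi0 lt_neqAle xi1 simplex_le1.
have [x' sx' [xE x'i x'supp]] := simplex_peel sx xi01.
rewrite (mulmx_peel xE); apply: cvx.
- by apply: Gcols; rewrite gt_eqF.
- apply: IH sx' _ => [|j /x'supp /Gcols //].
  move: suppN; rewrite (cardsD1 i) in_suppv gt_eqF // add1n ltnS; apply: leq_trans.
  apply: subset_leq_card; apply/fintype.subsetP => j; rewrite !inE => x'j.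
  by rewrite x'supp // andbT; apply: contraNneq x'j => ->; rewrite x'i.
- exact: ltW.
- by case/andP: xi01 => _ /ltW.
Qed.

End FaceSupport.

Section Separation.
Variables (R : realType) (m n : nat) (v : 'cV[R]_m) (M : 'M[R]_(m + 1, n)).
Implicit Types (S : {set 'I_n}) (x : 'cV[R]_n) (y : 'rV[R]_(n + n)).

Definition split_pair S x x' := [/\ simplex n x, simplex n x',
  forall i, i \notin S -> x i 0 = 0 & forall i, i \in S -> x' i 0 = 0].

Definition hulls_disjoint S := forall x x', split_pair S x x' -> M *m x <> M *m x'.

Definition sep_bound S e :=
  hulls_disjoint S -> forall x x', split_pair S x x' -> e <= normv v (M *m x - M *m x').

(* Pairs [(x, x')] are encoded as the row [row_mx x^T x'^T] of total weight 2, cut out by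
   the vanishing of the nonnegative function [split_defect S]. *)
Definition split_defect S y : R := `|\sum_i y 0 (lshift n i) - 1| +
  \sum_(i | i \notin S) y 0 (lshift n i) + \sum_(i | i \in S) y 0 (rshift n i).

Lemma cont_split_defect S : continuous (split_defect S).
Proof.
have cc j : continuous (fun y : 'rV[R]_(n + n) => y 0 j) by move=> y; apply: coord_continuous.
apply: cont_add; last exact: cont_sum.
apply: cont_add; last exact: cont_sum.
by apply: cont_norm; apply: cont_add; [apply: cont_sum | apply: cst_continuous].
Qed.

Lemma split_pair_zeros S x x' : split_pair S x x' ->
  scaled_simplex_zeros 2%:R (split_defect S) (row_mx x^T x'^T).
Proof.
move=> [[x0 x1] [x'0 x'1] xS x'S].
have yl i : row_mx x^T x'^T 0 (lshift n i) = x i 0 by rewrite row_mxEl mxE.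
have yr i : row_mx x^T x'^T 0 (rshift n i) = x' i 0 by rewrite row_mxEr mxE.
split=> [j||].
- by rewrite -(splitK j); case: (split j) => i /=; rewrite ?yl ?yr.
- rewrite big_split_ord /=; under eq_bigr do rewrite yl.
  by under [X in _ + X]eq_bigr do rewrite yr; rewrite x1 x'1.
rewrite /split_defect; under eq_bigr do rewrite yl.
under [\sum_(i | i \notin S) _]eq_bigr do rewrite yl.
under [\sum_(i | i \in S) _]eq_bigr do rewrite yr.
rewrite x1 subrr normr0 add0r big1 ?add0r => [|i /xS //].
by rewrite big1 // => i /x'S.
Qed.

Lemma zeros_split_pair S y : scaled_simplex_zeros 2%:R (split_defect S) y ->
  split_pair S (lsubmx y)^T (rsubmx y)^T.
Proof.
move=> [y0 y2 yS].
have yl i : (lsubmx y)^T i 0 = y 0 (lshift n i) by rewrite !mxE.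
have yr i : (rsubmx y)^T i 0 = y 0 (rshift n i) by rewrite !mxE.
have s1 : 0 <= \sum_(i | i \notin S) y 0 (lshift n i) by apply: sumr_ge0.
have s2 : 0 <= \sum_(i | i \in S) y 0 (rshift n i) by apply: sumr_ge0.
have := normr_ge0 (\sum_i y 0 (lshift n i) - 1); move: yS; rewrite /split_defect => yS a0.
have l1 : \sum_i y 0 (lshift n i) = 1.
  by apply/eqP; rewrite -subr_eq0 -normr_eq0; apply/eqP; lra.
have r1 : \sum_i y 0 (rshift n i) = 1 by move: y2; rewrite big_split_ord /= l1; lra.
split=> [||i iS|i iS]; rewrite ?yl ?yr.
- by split=> [i|]; rewrite ?yl // -l1; apply: eq_bigr => i _; rewrite yl.
- by split=> [i|]; rewrite ?yr // -r1; apply: eq_bigr => i _; rewrite yr.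
- have z1 : \sum_(i | i \notin S) y 0 (lshift n i) = 0 by lra.
  exact: (psumr_eq0P (fun i _ => y0 _) z1 iS).
- have z2 : \sum_(i | i \in S) y 0 (rshift n i) = 0 by lra.
  exact: (psumr_eq0P (fun i _ => y0 _) z2 iS).
Qed.

Lemma cont_normv_sqr K (N : 'M[R]_(m + 1, K)) :
  continuous (fun y : 'rV[R]_K => normv v (N *m y^T) ^+ 2).
Proof.
under eq_fun do rewrite normv_sqr -mul_usub_mx.
apply: cont_add; first exact: cont_dotv_mulmx_trmx.
apply: cont_norm; apply: cont_sum => k; apply: cont_mul; last exact: cont_mulmx_trmx.
exact: cst_continuous.
Qed.

Lemma pair_diffE y : row_mx 1%:M (- 1%:M) *m y^T = (lsubmx y)^T - (rsubmx y)^T.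
Proof. by rewrite -{1}[y]hsubmxK tr_row_mx mul_row_col mul1mx mulNmx mul1mx. Qed.

Lemma sep_const S : exists2 e, 0 < e & sep_bound S e.
Proof.
have [disj|] := pselect (hulls_disjoint S); last by exists 1 => // /[swap].
have [[x1 [x1' p1]]|none] := pselect (exists x x', split_pair S x x'); last first.
  by exists 1 => // _ x x' p; case: none; exists x, x'.
set D := row_mx 1%:M (- 1%:M) : 'M[R]_(n, n + n).
have [ys /zeros_split_pair pys ysmin] := scaled_simplex_zeros_min
  (@cont_split_defect S) (@cont_normv_sqr _ (M *m D)) (ex_intro _ _ (split_pair_zeros p1)).
set e := normv v (M *m (lsubmx ys)^T - M *m (rsubmx ys)^T).
exists e => [|_ x x' p].
  rewrite lt_def normv_ge0 andbT; apply/eqP => /normv_eq0/eqP.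
  by rewrite subr_eq0 => /eqP; apply: disj.
have := ysmin _ (split_pair_zeros p); rewrite -!mulmxA !pair_diffE !mulmxBr.
by rewrite row_mxKl row_mxKr !trmxK ler_sqr ?nnegrE ?normv_ge0.
Qed.

End Separation.

Lemma finite_uniform_pos (R : realType) (T : finType) (Q : T -> R -> Prop) :
  (forall t e e', Q t e -> 0 < e' -> e' <= e -> Q t e') ->
  (forall t, exists2 e, 0 < e & Q t e) -> exists2 e, 0 < e & forall t, Q t e.
Proof.
move=> Qdown Qpos.
suff [e e0 Qe] : exists2 e, 0 < e & forall t, t \in enum T -> Q t e.
  by exists e => // t; apply/Qe; rewrite mem_enum.
elim: (enum T) => [|t s [e e0 Qe]]; first by exists 1.
have [et et0 Qt] := Qpos t.
have e'0 : 0 < Num.min e et by rewrite lt_min e0 et0.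
exists (Num.min e et) => // u; rewrite in_cons => /orP[/eqP ->|us].
  by apply: Qdown Qt e'0 _; rewrite ge_min lexx orbT.
by apply: Qdown (Qe u us) e'0 _; rewrite ge_min lexx.
Qed.

Section PhiPositive.
Variables (R : realType) (m n : nat) (v : 'cV[R]_m) (M : 'M[R]_(m + 1, n)).

Definition face_cols (G : set 'cV[R]_(m + 1)) : {set 'I_n} := [set i | `[< G (col i M) >]]%SET.

Lemma in_face_cols G i : (i \in face_cols G) = `[< G (col i M) >].
Proof. by rewrite inE. Qed.

Lemma hulls_disjoint_face_cols G : is_face (Fv v M) G -> hulls_disjoint M (face_cols G).
Proof.
move=> faceG x x' [sx sx' xS x'S] Mxx'.
have Gx : G (M *m x).
  apply: (face_mulmx faceG sx) => i xi; apply/asboolP; rewrite -in_face_cols.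
  by apply: contraNT xi => /xS ->.
have [i x'i] := simplex_has_pos sx'; rewrite Mxx' in Gx.
move/asboolP: (face_col faceG Gx sx' x'i); rewrite -in_face_cols => /x'S x'i0.
by rewrite x'i0 ltxx in x'i.
Qed.

Lemma distv_face_ge e G : admissible_face v M G -> (forall S, sep_bound v M S e) ->
  e <= distv v G (conv_compl M G).
Proof.
move=> [faceG G0 Gconv] sep.
have subF : G `<=` Fv v M by case: faceG.
apply: lb_le_inf.
  have [w Gw] : G !=set0 by apply/set0P/eqP.
  have [i Gi] : exists i, ~ G (col i M).
    apply/not_existsP => allG; apply: Gconv; apply/seteqP; split=> [y /subF []//|].
    by move=> y [x sx ->]; apply: (face_mulmx faceG sx) => i _; apply: contrapT.
  exists (normv v (w - col i M)), w => //; exists (col i M) => //.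
  exists (delta_mx i 0); last by rewrite colE.
  split=> [|j Gj]; first exact: simplex_delta.
  by rewrite mxE; case: eqP => [ji|//]; case: Gi; rewrite -ji.
move=> r [w Gw [w' [x' [sx' x'S] ->] ->]].
have [x sx wE] := proj1 (subF w Gw); rewrite wE in Gw *.
apply: (sep _ (hulls_disjoint_face_cols faceG) x x'); split=> // i.
  rewrite in_face_cols => /asboolP Gi; apply/eqP; rewrite eq_le (proj1 sx) andbT leNgt.
  by apply/negP => x0i; apply/Gi/(face_col faceG Gw sx x0i).
by rewrite in_face_cols => /asboolP /x'S.
Qed.

Lemma Phi_gt0 : (exists G, admissible_face v M G) -> 0 < Phi v M.
Proof.
move=> [G0 aG0].
have [e e0 sepe] := finite_uniform_pos (Q := sep_bound v M)
  (fun S e e' sepSe _ e'e disj x x' p => le_trans e'e (sepSe disj x x' p)) (sep_const v M).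
apply: lt_le_trans e0 _; apply: lb_le_inf; first by exists (distv v G0 (conv_compl M G0)), G0.
by move=> r [G aG ->]; apply: distv_face_ge.
Qed.

End PhiPositive.

Section InfAttained.
Variables (R : realType) (m n : nat) (f : 'cV[R]_m -> R) (A : 'M[R]_(m, n)).

Lemma fstar_attained x0 : simplex n x0 -> (forall x, simplex n x -> f (A *m x0) <= f (A *m x)) ->
  fstar f A = f (A *m x0).
Proof. by move=> sx0 x0min; apply: inf_attained => [|r [x sx ->]]; [exists x0 | apply: x0min]. Qed.

Lemma dist1_attained x (Z : set 'cV[R]_n) z :
  Z z -> (forall z', Z z' -> norm1 (x - z) <= norm1 (x - z')) -> dist1 x Z = norm1 (x - z).
Proof. by move=> Zz zmin; apply: inf_attained => [|r [z' Zz' ->]]; [exists z | apply: zmin]. Qed.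

End InfAttained.

Section QuadraticLevel.
Variables (R : realType) (m n : nat) (P : 'M[R]_(m, n)) (B : 'M[R]_(1, n)).
Variable x0 : 'cV[R]_n.
Hypothesis sx0 : simplex n x0.
Hypothesis x0min : forall x, simplex n x -> obj P B x0 <= obj P B x.

Lemma exists_closest_level x : simplex n x -> exists z, [/\ simplex n z, obj P B z = obj P B x0 &
  forall z', simplex n z' -> obj P B z' = obj P B x0 -> norm1 (x - z) <= norm1 (x - z')].
Proof.
move=> sx.
have cE : continuous (fun y : 'rV[R]_n => obj P B y^T - obj P B x0).
  by apply: cont_add; [apply: cont_obj | apply: cst_continuous].
have cd : continuous (fun y : 'rV[R]_n => norm1 (x - y^T)).
  have -> : (fun y : 'rV[R]_n => norm1 (x - y^T)) = fun y => \sum_i `|x i 0 - y 0 i|.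
    by apply: funext => y; apply: eq_bigr => i _; rewrite !mxE.
  apply: cont_sum => i; apply: cont_norm; apply: cont_add; first exact: cst_continuous.
  by apply: cont_opp => y; apply: coord_continuous.
have [|z [sz /eqP]] := simplex_zeros_min (E := fun y => obj P B y - obj P B x0)
  (phi := fun y => norm1 (x - y)) cE cd; first by exists x0; rewrite subrr.
rewrite subr_eq0 => /eqP zx0 zmin; exists z; split=> // z' sz' z'x0.
by apply: zmin; rewrite z'x0 subrr.
Qed.

Lemma obj_nonconst i j : col i (col_mx P B) != col j (col_mx P B) ->
  exists2 x, simplex n x & obj P B x <> obj P B x0.
Proof.
move=> cij; apply: contrapT => const; move/negP: cij; apply.
have level k : P *m delta_mx k 0 = P *m x0 /\ B *m delta_mx k 0 = B *m x0.
  apply: (obj_level sx0 x0min (simplex_delta k)).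
  by apply: contrapT => nk; apply: const; exists (delta_mx k 0) => //; apply: simplex_delta.
have [Pi Bi] := level i; have [Pj Bj] := level j.
by rewrite !colE !mul_col_mx Pi Bi Pj Bj.
Qed.

Lemma Phi_gt0_nonconst : (exists2 x, simplex n x & obj P B x <> obj P B x0) ->
  0 < Phi (vstar P x0) (Abar P B).
Proof.
move=> [x sx xn]; have [z [sz zx0 zmin]] := exists_closest_level sx.
exact/Phi_gt0/(exists_admissible_face sx0 x0min sx sz zx0 xn zmin).
Qed.

End QuadraticLevel.

Lemma quadf_mulmx (R : realType) m n (Q S : 'M[R]_m) (A : 'M[R]_(m, n)) b x :
  S^T = S -> S *m S = Q -> quadf Q b (A *m x) = obj (S *m A) (b^T *m A) x.
Proof.
move=> ST SSQ; rewrite objE /quadf !dotvE mulmxA; congr (_ * _ 0 0 + _).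
  by rewrite -SSQ !trmx_mul ST !mulmxA.
by rewrite !mulmxA.
Qed.

Theorem corollary4 (R : realType) (m n : nat) (A : 'M[R]_(m, n)) (b : 'cV[R]_m)
    (Q S : 'M[R]_m) :
  Q^T = Q -> (forall x : 'cV[R]_m, 0 <= dotv x (Q *m x)) ->
  S^T = S -> (forall x : 'cV[R]_m, 0 <= dotv x (S *m x)) -> S *m S = Q ->
  (exists i j, col i (col_mx (S *m A) (b^T *m A)) != col j (col_mx (S *m A) (b^T *m A))) ->
  exists v : 'cV[R]_m,
    (forall u, argmin (quadf Q b) (conv A) u -> 2%:R *: (S *m u) = v) /\
    (Phi v (col_mx (S *m A) (2%:R *: (b^T *m A)))) ^+ 2 / 4%:R <= mu_star (quadf Q b) A /\
    0 < Phi v (col_mx (S *m A) (2%:R *: (b^T *m A))).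
Proof.
move=> _ _ ST _ SSQ [i [j cij]].
set P := S *m A; set B := b^T *m A.
have fE x := quadf_mulmx A b x ST SSQ.
have [x0 sx0 x0min] := obj_has_min P B (ex_intro _ _ (simplex_delta i)).
have fstarE : fstar (quadf Q b) A = obj P B x0.
  by rewrite (fstar_attained sx0) ?fE // => x sx; rewrite !fE x0min.
have ZE z : Zstar (quadf Q b) A z <-> simplex n z /\ obj P B z = obj P B x0.
  by rewrite /Zstar /= fE fstarE.
have nonconst := obj_nonconst sx0 x0min cij.
exists (vstar P x0); split; [|split]; last exact: Phi_gt0_nonconst.
  move=> _ [[x sx ->] umin]; rewrite mulmxA /vstar (obj_min_mulP sx sx0 x0min) //.
  by rewrite -!fE; apply: umin; exists x0.
apply: lb_le_inf => [|_ [x [sx /ZE nZx] ->]].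
  have [x1 sx1 x1n] := nonconst.
  by eexists; exists x1 => //; split=> // /ZE[].
have xn : obj P B x <> obj P B x0 by move=> xx0; apply: nZx.
have [z [sz zx0 zmin]] := exists_closest_level P B sx0 sx.
rewrite fE fstarE (dist1_attained (z := z)) => [||z' /ZE[]]; last exact: zmin.
  exact: closest_point_bound.
exact/ZE.
Qed.
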